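(* For all integers $n\ge0$, all $\mathbf{s}=(s_1,\dots,s_d)\in\mathbb{N}^d$ and all $y\in[-\pi/2,\pi/2]$, \[ \sum_{n_1>\cdots>n_d>n}\frac{a_{n_1}(\sin y)}{(2n_1+1)^{s_1}\cdots(2n_d+1)^{s_d}} =\csc y\cot y\,\frac{d}{dy}\int_0^y\theta_{s_1}\circ\cdots\circ\theta_{s_d}\circ a_n(\sin t)\sin t\tan t\,dt, \] \[ \sum_{n_1\ge\cdots\ge n_d\ge n}\frac{a_{n_1}(\sin y)}{(2n_1+1)^{s_1}\cdots(2n_d+1)^{s_d}} =\cot y\,\frac{d}{dy}\int_0^y q_{s_1}\circ\cdots\circ q_{s_d}\circ a_n(\sin t)\tan t\,dt, \] where for $y=\pm\pi/2$ the right-hand sides are understood as limits $y\to\pm\pi/2$.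
   Context: $\mathbb{N}=\{1,2,\dots\}$. Set $a_0(x)=1$ and $a_n(x)=\frac{1}{4^n}\binom{2n}{n}x^{2n}$ for $n\ge1$. Iterated integral notation: $\int_0^y f_1(t)dt\circ\cdots\circ f_r(t)dt:=\int_{y>t_1>\cdots>t_r>0}f_1(t_1)\cdots f_r(t_r)\,dt_1\cdots dt_r$ ($\circ$ may be omitted); $(\omega)^k$ is $\omega$ repeated $k$ times. Words mixing functions and 1-forms are expanded by linearity with the rule: for functions $F,G$ and 1-forms $f\,dt,g\,dt$, $[F+f\,dt\circ G]\circ g\,dt:=Fg\,dt+f\,dt\circ(Gg)\,dt$ (a function after $\circ$ multiplies the following 1-form). For $s\in\mathbb{N}$: $\theta_s(t):=\tan t\,dt\,(\cot t\,dt)^{s-1}\,(1-dt\circ\csc t\sec t)$ and $q_s(t):=\sec t\,dt\,(\cot t\,dt)^{s-1}\,(\csc t-dt\circ\sec t)$. *)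

From Stdlib Require Import Reals List Arith.
From Coquelicot Require Import Coquelicot.
Import ListNotations.
Open Scope R_scope.

Definition a (n : nat) (x : R) : R :=
  Stdlib.Reals.Binomial.C (2 * n)%nat n / 4 ^ n * x ^ (2 * n)%nat.

Definition csc (t : R) : R := / sin t.
Definition sec (t : R) : R := / cos t.
Definition cot (t : R) : R := cos t / sin t.

(* A word whose first letter is a
   1-form is represented by its "integrand" K : R -> R, i.e. the function such
   that  int_0^y (word) = RInt K 0 y.
   - prefixing a 1-form f dt to a word with integrand K gives the integrand
       t |-> f t * int_0^t K ;
   - prefixing a function G (which multiplies the following 1-form) gives
       t |-> G t * K t.
   Linear combinations of words correspond to linear combinations of
   integrands. *)
Definition Form (f : R -> R) (K : R -> R) : R -> R :=
  fun t => f t * RInt K 0 t.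
Definition Mul (G : R -> R) (K : R -> R) : R -> R :=
  fun t => G t * K t.

(* theta_s = tan t dt (cot t dt)^(s-1) (1 - dt o csc t sec t) *)
Definition theta (s : nat) (K : R -> R) : R -> R :=
  Form tan (Nat.iter (s - 1) (Form cot)
    (fun t => K t - Form (fun _ => 1) (Mul (fun u => csc u * sec u) K) t)).

(* q_s = sec t dt (cot t dt)^(s-1) (csc t - dt o sec t) *)
Definition qw (s : nat) (K : R -> R) : R -> R :=
  Form sec (Nat.iter (s - 1) (Form cot)
    (fun t => Mul csc K t - Form (fun _ => 1) (Mul sec K) t)).

Definition RHS1 (n : nat) (s : list nat) (y : R) : R :=
  csc y * cot y *
  Derive (fun z => RInt (fold_right theta
                          (fun t => a n (sin t) * sin t * tan t) s) 0 z) y.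

Definition RHS2 (n : nat) (s : list nat) (y : R) : R :=
  cot y *
  Derive (fun z => RInt (fold_right qw
                          (fun t => a n (sin t) * tan t) s) 0 z) y.

(* Finite truncations of the multiple sums.
   tailsum strict r prev m = sum over prev > k_2 > ... > k_d > m (strict)
   or prev >= k_2 >= ... >= k_d >= m (non-strict) of prod 1/(2k_i+1)^(s_i),
   where r = [s_2; ...; s_d]. *)
Fixpoint tailsum (strict : bool) (r : list nat) (prev m : nat) : R :=
  match r with
  | [] => if strict then (if Nat.ltb m prev then 1 else 0)
          else (if Nat.leb m prev then 1 else 0)
  | s :: r' =>
      fold_right Rplus 0
        (map (fun k => / (INR (2 * k + 1)%nat ^ s) * tailsum strict r' k m)
             (seq 0 (if strict then prev else S prev)))
  end.

Definition trunc (strict : bool) (s : list nat) (n : nat) (x : R) (N : nat) : R :=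
  match s with
  | [] => 0
  | s1 :: r =>
      fold_right Rplus 0
        (map (fun k => a k x / (INR (2 * k + 1)%nat ^ s1) * tailsum strict r k n)
             (seq 0 (S N)))
  end.

(* The multiple sums (nonnegative terms: limit of truncations) *)
Definition msum (strict : bool) (s : list nat) (n : nat) (x : R) : R :=
  real (Lim_seq (trunc strict s n x)).

(* Both sides are the even power series [sum_m a_m(1) c_m x^(2m)] at
   [x = sin y], where [c_m] is the inner multiple sum with [n_1 = m].  If the integrand so far is
   [sin t tan t G(sin t)] with [G = sum_m a_m(1) c_m x^(2m)], the part
   [1 - dt o csc t sec t] turns it into [cos t E(sin t)], where [E] has the
   partial sums [c_0 + ... + c_(m-1)] in place of [c_m]: the antiderivative
   [(sin^2 t G - cos^2 t E) / cos t] works because the recurrence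
   [(2m+2) a_(m+1)(1) = (2m+1) a_m(1)] gives [(1 - x^2) E' = x (G + E) + x^2 G'].
   Each [cot t dt] and the leading [tan t dt] then divide the coefficient of
   [x^(2m)] by [2m+1].  The letters [q_s] behave alike with [G + E] in place
   of [E].  Convergence for [|x| <= 1] follows by summation by parts against
   [a_m(1) - a_(m+1)(1) = a_m(1) / (2m+2)], the inner sums being bounded by
   powers of [sum_(k<=m) 1/(2k+1)]; the values at [y = +-pi/2] are then limits
   by Abel's theorem, and [y = 0] is a removable singularity by continuity. *)

From Stdlib Require Import Reals List Arith Lra Lia.
From Coquelicot Require Import Coquelicot.
Import ListNotations.
Open Scope R_scope.

(* Coquelicot lemmas state equalities at the types of its algebraic
   hierarchy; [ring] and [field] only recognise them at type [R]. *)
Ltac R_eq := match goal with |- ?x = ?y => change (@eq R x y) end.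

Fixpoint psum (f : nat -> R) (M : nat) : R :=
  match M with O => 0 | S k => psum f k + f k end.

Lemma psum_ext f g M : (forall k, (k < M)%nat -> f k = g k) -> psum f M = psum g M.
Proof.
  induction M as [|M IH]; intros Hfg; simpl; auto.
  rewrite IH by (intros; apply Hfg; lia). rewrite Hfg by lia. reflexivity.
Qed.

Lemma psum_le f g M : (forall k, (k < M)%nat -> f k <= g k) -> psum f M <= psum g M.
Proof.
  induction M as [|M IH]; intros Hfg; simpl; [lra|].
  apply Rplus_le_compat; [apply IH; intros; apply Hfg|apply Hfg]; lia.
Qed.

Lemma psum_nonneg f M : (forall k, 0 <= f k) -> 0 <= psum f M.
Proof. intros Hf. induction M; simpl; [lra|]. specialize (Hf M). lra. Qed.

Lemma psum_le_mono f M N : (forall k, 0 <= f k) -> (M <= N)%nat -> psum f M <= psum f N.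
Proof. intros Hf HMN. induction HMN; simpl; [lra|]. specialize (Hf m). lra. Qed.

Lemma psum_Sl g m : psum g (S m) = g O + psum (fun k => g (S k)) m.
Proof. induction m as [|m IH]; [simpl; ring|]. change (psum g (S (S m))) with (psum g (S m) + g (S m)).
  rewrite IH. simpl. ring. Qed.

Lemma psum_scal c f M : psum (fun k => c * f k) M = c * psum f M.
Proof. induction M as [|M IH]; simpl; [ring|]. rewrite IH. ring. Qed.

Lemma psum_indicator n m :
  psum (fun k => if Nat.eqb k n then 1 else 0) m = if Nat.ltb n m then 1 else 0.
Proof.
  induction m as [|m IH]; simpl; auto. rewrite IH.
  destruct (Nat.ltb_spec n m), (Nat.eqb_spec m n), (Nat.ltb_spec n (S m)); lia || lra.
Qed.

Lemma fold_right_map_seq f j m :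
  fold_right Rplus 0 (map f (seq j m)) = psum (fun k => f (j + k)%nat) m.
Proof.
  revert j. induction m as [|m IH]; intros j; [reflexivity|].
  cbn [seq map fold_right]. rewrite IH, (psum_Sl (fun k => f (j + k)%nat)), Nat.add_0_r.
  f_equal. apply psum_ext. intros. f_equal. lia.
Qed.

Lemma sum_n_psum (g : nat -> R) N : sum_n g N = psum g (S N).
Proof. induction N as [|N IH]; [rewrite sum_O; simpl; ring|]. rewrite sum_Sn, IH. reflexivity. Qed.

(** * The coefficients [a_m(1) = binom(2m, m) / 4^m] *)

Definition acoef (m : nat) : R := a m 1.

Lemma a_acoef m x : a m x = acoef m * x ^ (2 * m).
Proof. unfold acoef, a. rewrite pow1. ring. Qed.

Lemma acoef_0 : acoef 0 = 1.
Proof. unfold acoef, a, Binomial.C. simpl. lra. Qed.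

Lemma acoef_pos m : 0 < acoef m.
Proof.
  unfold acoef, a, Binomial.C. rewrite pow1, Rmult_1_r.
  pose proof (lt_0_INR _ (lt_O_fact (2 * m))). pose proof (lt_0_INR _ (lt_O_fact m)).
  pose proof (lt_0_INR _ (lt_O_fact (2 * m - m))). pose proof (pow_lt 4 m ltac:(lra)).
  apply Rdiv_lt_0_compat; auto. apply Rdiv_lt_0_compat; auto. nra.
Qed.

Lemma acoef_S m : acoef (S m) * INR (2 * m + 2) = acoef m * INR (2 * m + 1).
Proof.
  unfold acoef, a, Binomial.C. rewrite !pow1.
  replace (2 * S m)%nat with (S (S (2 * m))) by lia.
  replace (S (S (2 * m)) - S m)%nat with (S m) by lia.
  replace (2 * m - m)%nat with m by lia.
  replace (2 * m + 1)%nat with (S (2 * m)) by lia.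
  replace (2 * m + 2)%nat with (S (S (2 * m))) by lia.
  rewrite !fact_simpl, !mult_INR, !S_INR, !mult_INR. simpl pow.
  pose proof (INR_fact_neq_0 m). pose proof (INR_fact_neq_0 (2 * m)).
  pose proof (pow_nonzero 4 m ltac:(lra)). pose proof (pos_INR m).
  replace (INR 2) with 2 by (simpl; lra). field. repeat split; lra.
Qed.

Lemma acoef_sub_S m : acoef m - acoef (S m) = acoef m / INR (2 * m + 2).
Proof.
  pose proof (acoef_S m) as Hrec. assert (Hnz : INR (2 * m + 2) <> 0) by (apply not_0_INR; lia).
  apply (Rmult_eq_reg_r (INR (2 * m + 2))); auto. field_simplify; auto.
  rewrite Hrec, !plus_INR, !mult_INR. simpl. ring.
Qed.

Lemma acoef_div_odd_le m : acoef m / INR (2 * m + 1) <= 2 * (acoef m - acoef (S m)).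
Proof.
  rewrite acoef_sub_S, !plus_INR, mult_INR. pose proof (acoef_pos m). pose proof (pos_INR m).
  simpl. apply Rmult_le_reg_r with ((2 * INR m + 1) * (2 * INR m + 2)); [nra|].
  field_simplify; nra.
Qed.

(** * Even power series *)

Definition evenPS (f : nat -> R) (j : nat) : R :=
  if Nat.even j then f (Nat.div2 j) else 0.

Lemma evenPS_double f m : evenPS f (2 * m) = f m.
Proof. unfold evenPS. rewrite Nat.even_mul, Nat.div2_double. reflexivity. Qed.

Lemma evenPS_S_double f m : evenPS f (S (2 * m)) = 0.
Proof. unfold evenPS. rewrite Nat.even_succ, Nat.odd_mul. reflexivity. Qed.

Lemma nat_double_cases (j : nat) : exists m, j = (2 * m)%nat \/ j = S (2 * m).
Proof. destruct (Nat.Even_or_Odd j) as [[m Hm]|[m Hm]]; exists m; lia. Qed.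

Lemma evenPS_ext f g j : (forall m, f m = g m) -> evenPS f j = evenPS g j.
Proof. intros Hfg. unfold evenPS. destruct (Nat.even j); auto. Qed.

Lemma evenPS_nonneg f j : (forall k, 0 <= f k) -> 0 <= evenPS f j.
Proof. intros Hf. unfold evenPS. destruct (Nat.even j); auto. lra. Qed.

Lemma psum_evenPS f x M :
  psum (fun j => evenPS f j * x ^ j) (2 * M) = psum (fun k => f k * x ^ (2 * k)) M.
Proof.
  induction M as [|M IH]; [reflexivity|].
  replace (2 * S M)%nat with (S (S (2 * M))) by lia.
  change (psum (fun j => evenPS f j * x ^ j) (2 * M) + evenPS f (2 * M) * x ^ (2 * M)
    + evenPS f (S (2 * M)) * x ^ S (2 * M) = psum (fun k => f k * x ^ (2 * k)) M + f M * x ^ (2 * M)).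
  rewrite IH, evenPS_double, evenPS_S_double. ring.
Qed.

Lemma PSeries_evenPS_opp f x : PSeries (evenPS f) (- x) = PSeries (evenPS f) x.
Proof.
  apply Series_ext. intros k. destruct (nat_double_cases k) as [m [-> | ->]].
  - rewrite !pow_mult. replace ((- x) ^ 2) with (x ^ 2) by (R_eq; ring). reflexivity.
  - rewrite evenPS_S_double. R_eq. ring.
Qed.

Lemma evenPS_CV_disk_1 (f : nat -> R) B : (forall k, 0 <= f k) -> (forall M, psum f M <= B) ->
  CV_disk (evenPS f) 1 /\ Rbar_le 1 (CV_radius (evenPS f)).
Proof.
  intros Hf HB.
  assert (Hnn : forall j, 0 <= evenPS f j) by (intros; apply evenPS_nonneg; auto).
  assert (Hterm : forall j, Rabs (evenPS f j * 1 ^ j) = evenPS f j)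
    by (intros; rewrite pow1, Rmult_1_r, Rabs_pos_eq; auto).
  assert (Hs : forall j, psum (evenPS f) j <= B).
  { intros j. apply Rle_trans with (psum (evenPS f) (2 * j)); [apply psum_le_mono; auto; lia|].
    rewrite (psum_ext _ (fun j => evenPS f j * 1 ^ j)) by (intros; rewrite pow1; ring).
    rewrite psum_evenPS, (psum_ext _ f) by (intros; rewrite pow1; ring). auto. }
  split.
  - apply ex_series_ext with (evenPS f); [intros; symmetry; apply Hterm|].
    destruct (ex_finite_lim_seq_incr (sum_n (evenPS f)) B) as [l Hl].
    + intros k. rewrite !sum_n_psum. simpl. specialize (Hnn (S k)). lra.
    + intros k. rewrite sum_n_psum. auto.
    + exists l. exact Hl.
  - destruct (CV_radius_bounded (evenPS f)) as [Hub _]. apply Hub. exists B. intros k. rewrite Hterm.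
    apply Rle_trans with (psum (evenPS f) (S k)); auto. simpl.
    pose proof (psum_nonneg (evenPS f) k Hnn). lra.
Qed.

Lemma PSeries_evenPS_lim f x : ex_pseries (evenPS f) x ->
  is_lim_seq (fun N => psum (fun k => f k * x ^ (2 * k)) (S N)) (PSeries (evenPS f) x).
Proof.
  intros Hx. apply ex_pseries_R, Series_correct in Hx.
  change (is_lim_seq (sum_n (fun j => evenPS f j * x ^ j)) (PSeries (evenPS f) x)) in Hx.
  apply (is_lim_seq_subseq _ _ (fun N => S (2 * N))) in Hx; [|apply eventually_subseq; intros; lia].
  eapply is_lim_seq_ext; [|exact Hx]. intros N. cbv beta.
  rewrite sum_n_psum. replace (S (S (2 * N))) with (2 * S N)%nat by lia. apply psum_evenPS.
Qed.

(* [PS_div_succ p] is the series of [x |-> (1/x) int_0^x p]. *)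
Definition PS_div_succ (p : nat -> R) : nat -> R := PS_decr_1 (PS_Int p).

Lemma PS_div_succ_eq p n : PS_div_succ p n = p n / INR (S n).
Proof. reflexivity. Qed.

Lemma PS_derive_Int p n : PS_derive (PS_Int p) n = p n.
Proof. unfold PS_derive, PS_Int. field. apply not_0_INR. lia. Qed.

Lemma CV_radius_iter_div_succ k p : CV_radius (Nat.iter k PS_div_succ p) = CV_radius p.
Proof.
  induction k as [|k IH]; simpl; auto.
  unfold PS_div_succ. rewrite CV_radius_decr_1, CV_radius_Int. exact IH.
Qed.

Lemma iter_div_succ_ext k p q : (forall n, p n = q n) ->
  forall n, Nat.iter k PS_div_succ p n = Nat.iter k PS_div_succ q n.
Proof. intros Hpq. induction k as [|k IH]; intros n; simpl; auto. rewrite !PS_div_succ_eq, IH. auto. Qed.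

Lemma iter_div_succ_evenPS k f n :
  Nat.iter k PS_div_succ (evenPS f) n = evenPS (fun m => f m / INR (2 * m + 1) ^ k) n.
Proof.
  revert n. induction k as [|k IH]; intros n.
  - apply evenPS_ext. intros. simpl. unfold Rdiv. rewrite Rinv_1. ring.
  - simpl Nat.iter. rewrite PS_div_succ_eq, IH.
    destruct (nat_double_cases n) as [m [-> | ->]].
    + rewrite !evenPS_double. replace (S (2 * m)) with (2 * m + 1)%nat by lia.
      rewrite <- tech_pow_Rmult. assert (Hnz : INR (2 * m + 1) <> 0) by (apply not_0_INR; lia).
      pose proof (pow_nonzero _ k Hnz). field. auto.
    + rewrite !evenPS_S_double. unfold Rdiv. ring.
Qed.

(** * Convergence of the multiple sums on the closed disc *)

(* For [s = s1 :: r], [acoef m * mcoef b n s m] is the coefficient of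
   [x ^ (2 m)] in the multiple sum (the terms with [n_1 = m]); the empty word
   stands for [a_n] itself. *)
Definition mcoef (strict : bool) (n : nat) (s : list nat) (m : nat) : R :=
  match s with
  | [] => if Nat.eqb m n then 1 else 0
  | s1 :: r => tailsum strict r m n / INR (2 * m + 1) ^ s1
  end.

Definition acoefPS (c : nat -> R) : nat -> R := evenPS (fun m => acoef m * c m).

Lemma tailsum_cons b s r m n :
  tailsum b (s :: r) m n =
  psum (fun k => / INR (2 * k + 1) ^ s * tailsum b r k n) (if b then m else S m).
Proof. simpl tailsum. rewrite fold_right_map_seq. reflexivity. Qed.

Lemma psum_mcoef_strict n r m : psum (mcoef true n r) m = tailsum true r m n.
Proof.
  destruct r as [|s r]; [apply psum_indicator|].
  rewrite tailsum_cons. apply psum_ext. intros. simpl. unfold Rdiv. ring.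
Qed.

Lemma psum_mcoef_nonstrict n r m : psum (mcoef false n r) (S m) = tailsum false r m n.
Proof.
  destruct r as [|s r].
  - unfold mcoef. rewrite psum_indicator. simpl.
    destruct (Nat.ltb_spec n (S m)), (Nat.leb_spec n m); lia || reflexivity.
  - rewrite tailsum_cons. apply psum_ext. intros. simpl. unfold Rdiv. ring.
Qed.

Lemma inv_odd_pow_pos k s : 0 < / INR (2 * k + 1) ^ s.
Proof. apply Rinv_0_lt_compat, pow_lt, lt_0_INR. lia. Qed.

Lemma inv_pow_le x s : 1 <= x -> (1 <= s)%nat -> / x ^ s <= / x.
Proof.
  intros Hx Hs. destruct s as [|s]; [lia|]. rewrite <- tech_pow_Rmult.
  pose proof (pow_R1_Rle x s Hx). apply Rinv_le_contravar; nra.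
Qed.

Lemma tailsum_nonneg b r m n : 0 <= tailsum b r m n.
Proof.
  revert m. induction r as [|s r IH]; intros m.
  - simpl. destruct b; [destruct (Nat.ltb n m)|destruct (Nat.leb n m)]; lra.
  - rewrite tailsum_cons. apply psum_nonneg. intros k.
    apply Rmult_le_pos; [left; apply inv_odd_pow_pos|apply IH].
Qed.

Lemma mcoef_nonneg b n s k : 0 <= mcoef b n s k.
Proof.
  destruct s as [|s1 r]; simpl.
  - destruct (Nat.eqb k n); lra.
  - apply Rmult_le_pos; [apply tailsum_nonneg|left; apply inv_odd_pow_pos].
Qed.

Definition odd_harmonic (m : nat) : R := psum (fun k => / INR (2 * k + 1)) (S m).

Lemma odd_harmonic_0 : odd_harmonic 0 = 1.
Proof. unfold odd_harmonic. simpl. field. Qed.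

Lemma odd_harmonic_S m : odd_harmonic (S m) = odd_harmonic m + / INR (2 * S m + 1).
Proof. reflexivity. Qed.

Lemma odd_harmonic_le_mono m m' : (m <= m')%nat -> odd_harmonic m <= odd_harmonic m'.
Proof.
  intros. apply psum_le_mono; [|lia]. intros k. left.
  apply Rinv_0_lt_compat, lt_0_INR. lia.
Qed.

Lemma odd_harmonic_ge_1 m : 1 <= odd_harmonic m.
Proof. rewrite <- odd_harmonic_0. apply odd_harmonic_le_mono. lia. Qed.

Lemma tailsum_le_odd_harmonic b r m n : List.Forall (fun k => (1 <= k)%nat) r ->
  tailsum b r m n <= odd_harmonic m ^ length r.
Proof.
  revert m. induction r as [|s r IH]; intros m Hr.
  - simpl. destruct b; [destruct (Nat.ltb n m)|destruct (Nat.leb n m)]; lra.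
  - inversion Hr as [|? ? Hs Hr']; subst. rewrite tailsum_cons.
    apply Rle_trans with (psum (fun k => / INR (2 * k + 1) ^ s * tailsum b r k n) (S m)).
    { apply psum_le_mono; [|destruct b; lia]. intros k.
      apply Rmult_le_pos; [left; apply inv_odd_pow_pos|apply tailsum_nonneg]. }
    apply Rle_trans with (psum (fun k => odd_harmonic m ^ length r * / INR (2 * k + 1)) (S m)).
    { apply psum_le. intros k Hk. rewrite Rmult_comm. apply Rmult_le_compat.
      - apply tailsum_nonneg.
      - left. apply inv_odd_pow_pos.
      - apply Rle_trans with (odd_harmonic k ^ length r); auto. apply pow_incr. split.
        + pose proof (odd_harmonic_ge_1 k). lra.
        + apply odd_harmonic_le_mono. lia.
      - apply inv_pow_le; auto. apply (le_INR 1). lia. }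
    rewrite psum_scal. simpl length. rewrite <- tech_pow_Rmult. right. unfold odd_harmonic. ring.
Qed.

Lemma pow_sub_le x y p : 0 <= y <= x -> x ^ S p - y ^ S p <= INR (S p) * x ^ p * (x - y).
Proof.
  intros [Hy Hyx]. induction p as [|p IH]; [simpl; lra|].
  replace (x ^ S (S p) - y ^ S (S p)) with (x ^ S p * (x - y) + y * (x ^ S p - y ^ S p)) by (simpl; ring).
  rewrite S_INR. apply Rle_trans with (x ^ S p * (x - y) + y * (INR (S p) * x ^ p * (x - y))).
  - apply Rplus_le_compat_l, Rmult_le_compat_l; auto.
  - assert (Hyx' : y * x ^ p <= x ^ S p) by (apply Rmult_le_compat_r; [apply pow_le|]; lra).
    pose proof (Rmult_le_pos (INR (S p)) (x - y) (pos_INR _) ltac:(lra)). nra.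
Qed.

Lemma psum_acoef_by_parts (w : nat -> R) M :
  psum (fun m => (acoef m - acoef (S m)) * w m) M + acoef M * w M =
  w O + psum (fun m => acoef (S m) * (w (S m) - w m)) M.
Proof. induction M as [|M IH]; simpl; [rewrite acoef_0; ring|]. lra. Qed.

(* Summation by parts against [acoef m - acoef (S m) = acoef m / (2m+2)]. *)
Lemma psum_acoef_weighted_le (w : nat -> R) M : (forall m, 0 <= w m) -> w O = 1 ->
  psum (fun m => acoef m / INR (2 * m + 1) * w m) M <=
  2 * (1 + psum (fun m => acoef (S m) * (w (S m) - w m)) M).
Proof.
  intros Hw Hw0.
  apply Rle_trans with (2 * psum (fun m => (acoef m - acoef (S m)) * w m) M).
  { rewrite <- psum_scal. apply psum_le. intros k _. rewrite <- Rmult_assoc.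
    apply Rmult_le_compat_r; auto. apply acoef_div_odd_le. }
  pose proof (psum_acoef_by_parts w M). pose proof (acoef_pos M). specialize (Hw M). nra.
Qed.

Lemma psum_acoef_odd_harmonic_bounded p :
  exists B, forall M, psum (fun m => acoef m / INR (2 * m + 1) * odd_harmonic m ^ p) M <= B.
Proof.
  assert (Hge0 : forall q m, 0 <= odd_harmonic m ^ q)
    by (intros; apply pow_le; pose proof (odd_harmonic_ge_1 m); lra).
  assert (Hw0 : forall q, odd_harmonic 0 ^ q = 1) by (intros; rewrite odd_harmonic_0; apply pow1).
  induction p as [|p [B HB]].
  - exists 2. intros M. eapply Rle_trans; [apply psum_acoef_weighted_le; auto|].
    rewrite (psum_ext _ (fun _ => 0 * 0)) by (intros; simpl; ring). rewrite psum_scal. lra.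
  - exists (2 * (1 + INR (S p) * B)). intros M.
    eapply Rle_trans; [apply psum_acoef_weighted_le; auto|].
    apply Rmult_le_compat_l, Rplus_le_compat_l; [lra|].
    apply Rle_trans with
      (INR (S p) * psum (fun m => acoef (S m) / INR (2 * S m + 1) * odd_harmonic (S m) ^ p) M).
    + rewrite <- psum_scal. apply psum_le. intros k _.
      pose proof (pow_sub_le (odd_harmonic (S k)) (odd_harmonic k) p) as Hd.
      rewrite odd_harmonic_S in Hd at 3. pose proof (odd_harmonic_ge_1 k).
      pose proof (odd_harmonic_le_mono k (S k) ltac:(lia)). pose proof (acoef_pos (S k)).
      apply Rle_trans with (acoef (S k) * (INR (S p) * odd_harmonic (S k) ^ p
        * (odd_harmonic k + / INR (2 * S k + 1) - odd_harmonic k))).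
      * apply Rmult_le_compat_l; [lra|]. apply Hd. lra.
      * right. unfold Rdiv. ring.
    + apply Rmult_le_compat_l; [apply pos_INR|]. eapply Rle_trans; [|apply (HB (S M))].
      rewrite (psum_Sl _ M). assert (0 <= acoef 0 / INR (2 * 0 + 1) * odd_harmonic 0 ^ p).
      { rewrite Hw0, acoef_0. simpl. lra. }
      lra.
Qed.

Lemma psum_acoef_mcoef_bounded b n s : List.Forall (fun k => (1 <= k)%nat) s ->
  exists B, forall M, psum (fun k => acoef k * mcoef b n s k) M <= B.
Proof.
  intros Hs. destruct s as [|s1 r].
  - exists (acoef n). intros M.
    rewrite (psum_ext _ (fun k => acoef n * (if Nat.eqb k n then 1 else 0))).
    + rewrite psum_scal, psum_indicator. pose proof (acoef_pos n). destruct (Nat.ltb n M); nra.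
    + intros k _. simpl. destruct (Nat.eqb_spec k n); subst; ring.
  - inversion Hs as [|? ? Hs1 Hr]; subst.
    destruct (psum_acoef_odd_harmonic_bounded (length r)) as [B HB]. exists B. intros M.
    eapply Rle_trans; [|apply (HB M)]. apply psum_le. intros k _. unfold mcoef, Rdiv.
    pose proof (acoef_pos k). pose proof (tailsum_le_odd_harmonic b r k n Hr).
    pose proof (tailsum_nonneg b r k n). pose proof (inv_odd_pow_pos k s1).
    pose proof (inv_pow_le (INR (2 * k + 1)) s1 ltac:(apply (le_INR 1); lia) Hs1).
    rewrite Rmult_assoc. apply Rmult_le_compat_l; [lra|].
    rewrite (Rmult_comm (/ INR (2 * k + 1))). apply Rmult_le_compat; lra.
Qed.

Lemma acoefPS_mcoef_CV_disk b n s : List.Forall (fun k => (1 <= k)%nat) s ->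
  CV_disk (acoefPS (mcoef b n s)) 1 /\ Rbar_le 1 (CV_radius (acoefPS (mcoef b n s))).
Proof.
  intros Hs. destruct (psum_acoef_mcoef_bounded b n s Hs) as [B HB].
  apply (evenPS_CV_disk_1 _ B); auto.
  intros k. apply Rmult_le_pos; [left; apply acoef_pos|apply mcoef_nonneg].
Qed.

(** * The letters of the words as operations on power series in [sin t] *)

Definition I_half (t : R) : Prop := - PI / 2 < t < PI / 2.

Lemma cos_pos_I_half t : I_half t -> 0 < cos t.
Proof. intros [Hl Hr]. apply cos_gt_0; lra. Qed.

Lemma Rabs_sin_lt_1 t : I_half t -> Rabs (sin t) < 1.
Proof.
  intros Ht. pose proof (cos_pos_I_half t Ht). pose proof (sin2_cos2 t). unfold Rsqr in *.
  apply Rabs_def1; nra.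
Qed.

Lemma sin_neq_0_I_half t : I_half t -> t <> 0 -> sin t <> 0.
Proof.
  intros [Hl Hr] Ht0. pose proof PI_RGT_0. destruct (Rlt_or_le 0 t).
  - apply Rgt_not_eq, sin_gt_0; lra.
  - rewrite <- (Ropp_involutive t), sin_neg. pose proof (sin_gt_0 (- t)). lra.
Qed.

Lemma I_half_between t u : I_half t -> Rmin 0 t <= u <= Rmax 0 t -> I_half u.
Proof. unfold I_half, Rmin, Rmax. pose proof PI_RGT_0. destruct (Rle_dec 0 t); lra. Qed.

Lemma locally_I_half y : I_half y -> locally y I_half.
Proof.
  intros [Hl Hr]. apply (locally_interval _ y (Finite (- PI / 2)) (Finite (PI / 2))); simpl; auto.
  intros z Hz1 Hz2. split; auto.
Qed.

Lemma Rbar_lt_radius p x : Rbar_le 1 (CV_radius p) -> Rabs x < 1 -> Rbar_lt (Rabs x) (CV_radius p).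
Proof. intros Hp Hx. destruct (CV_radius p); simpl in *; auto; lra. Qed.

Lemma ex_derive_PSeries_sin p u : Rbar_le 1 (CV_radius p) -> I_half u ->
  ex_derive (PSeries p) (sin u).
Proof. intros. apply ex_derive_PSeries, Rbar_lt_radius, Rabs_sin_lt_1; auto. Qed.

Lemma Derive_PSeries_sin p u : Rbar_le 1 (CV_radius p) -> I_half u ->
  Derive (PSeries p) (sin u) = PSeries (PS_derive p) (sin u).
Proof. intros. apply Derive_PSeries, Rbar_lt_radius, Rabs_sin_lt_1; auto. Qed.

(* Integrands need only agree with [f] off [t = 0], where [csc] and [cot] are singular. *)
Lemma RInt_I_half_antiderivative (F f X : R -> R) t : I_half t ->
  (forall u, I_half u -> is_derive F u (f u)) -> (forall u, I_half u -> continuous f u) ->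
  (forall u, I_half u -> u <> 0 -> X u = f u) -> RInt X 0 t = F t - F 0.
Proof.
  intros Ht HF Hf HX. rewrite (RInt_ext X f).
  - apply is_RInt_unique, (is_RInt_derive F f); intros u Hu; [apply HF|apply Hf];
      apply (I_half_between t); auto.
  - intros u Hu. apply HX; [apply (I_half_between t); [auto|lra]|].
    unfold Rmin, Rmax in Hu. destruct (Rle_dec 0 t); lra.
Qed.

Lemma RInt_cos_PSeries_sin p X t : Rbar_le 1 (CV_radius p) ->
  (forall u, I_half u -> u <> 0 -> X u = cos u * PSeries p (sin u)) -> I_half t ->
  RInt X 0 t = sin t * PSeries (PS_div_succ p) (sin t).
Proof.
  intros Hp HX Ht.
  assert (Hp' : Rbar_le 1 (CV_radius (PS_Int p))) by (rewrite CV_radius_Int; auto).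
  rewrite (RInt_I_half_antiderivative (fun u => PSeries (PS_Int p) (sin u))
             (fun u => cos u * PSeries p (sin u)) X t Ht); auto.
  - rewrite sin_0, PSeries_0, PSeries_decr_1.
    + unfold PS_div_succ. simpl. R_eq. ring.
    + apply CV_radius_inside, Rbar_lt_radius, Rabs_sin_lt_1; auto.
  - intros u Hu. auto_derive; [apply ex_derive_PSeries_sin; auto|].
    rewrite Derive_PSeries_sin, (PSeries_ext _ p) by (auto; apply PS_derive_Int). ring.
  - intros u Hu. apply (@ex_derive_continuous R_AbsRing R_NormedModule).
    auto_derive. apply ex_derive_PSeries_sin; auto.
Qed.

Lemma iter_Form_cot j p X t : Rbar_le 1 (CV_radius p) ->
  (forall u, I_half u -> u <> 0 -> X u = cos u * PSeries p (sin u)) -> I_half t -> t <> 0 ->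
  Nat.iter j (Form cot) X t = cos t * PSeries (Nat.iter j PS_div_succ p) (sin t).
Proof.
  intros Hp HX. revert t. induction j as [|j IH]; intros t Ht Ht0; [simpl; auto|].
  simpl Nat.iter at 1. unfold Form. rewrite (RInt_cos_PSeries_sin (Nat.iter j PS_div_succ p)); auto.
  - unfold cot. pose proof (sin_neq_0_I_half t Ht Ht0). simpl Nat.iter. R_eq. field. auto.
  - rewrite CV_radius_iter_div_succ. auto.
Qed.

Lemma Rbar_le_1_CV_radius_plus p q : Rbar_le 1 (CV_radius p) -> Rbar_le 1 (CV_radius q) ->
  Rbar_le 1 (CV_radius (PS_plus p q)).
Proof. intros Hp Hq. eapply Rbar_le_trans; [|apply CV_radius_plus]. apply Rbar_min_case; auto. Qed.

Lemma ex_pseries_radius_1 p x : Rbar_le 1 (CV_radius p) -> Rabs x < 1 -> ex_pseries p x.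
Proof. intros. apply CV_radius_inside, Rbar_lt_radius; auto. Qed.

Lemma PS_plus_eq (p q : nat -> R) n : PS_plus p q n = p n + q n.
Proof. reflexivity. Qed.

Lemma PS_incr_1_0 (p : nat -> R) : PS_incr_1 p 0 = 0.
Proof. reflexivity. Qed.

Lemma PS_incr_1_S (p : nat -> R) n : PS_incr_1 p (S n) = p n.
Proof. reflexivity. Qed.

Section PartialSums.

Variable c : nat -> R.

Local Notation G := (acoefPS c).
Local Notation E := (acoefPS (psum c)).

(* Coefficientwise this is the recurrence [acoef_S]. *)
Lemma PS_derive_acoefPS_psum j :
  PS_derive E j =
  PS_plus (PS_plus (PS_incr_1 G) (PS_incr_1 E))
          (PS_plus (PS_incr_1 (PS_incr_1 (PS_derive G))) (PS_incr_1 (PS_incr_1 (PS_derive E)))) j.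
Proof.
  rewrite !PS_plus_eq. unfold PS_derive. destruct j as [|[|k]]; rewrite ?PS_incr_1_S, ?PS_incr_1_0.
  - unfold acoefPS, evenPS. simpl. ring.
  - change (E 2%nat) with (E (2 * 1)%nat). change (G 0%nat) with (G (2 * 0)%nat).
    change (E 0%nat) with (E (2 * 0)%nat). unfold acoefPS. rewrite !evenPS_double.
    pose proof (acoef_S 0) as Hrec. simpl in Hrec |- *. nra.
  - unfold acoefPS. destruct (nat_double_cases k) as [m [-> | ->]].
    + replace (S (S (S (2 * m)))) with (S (2 * S m)) by lia. rewrite !evenPS_S_double. R_eq. ring.
    + replace (S (S (S (S (2 * m))))) with (2 * S (S m))%nat by lia.
      replace (S (S (2 * m))) with (2 * S m)%nat by lia. rewrite !evenPS_double.
      pose proof (acoef_S (S m)) as Hrec.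
      replace (2 * S m + 2)%nat with (2 * S (S m))%nat in Hrec by lia.
      replace (INR (2 * S m + 1)) with (INR (2 * S m) + 1) in Hrec by (rewrite <- S_INR; f_equal; lia).
      change (psum c (S (S m))) with (psum c (S m) + c (S m)).
      R_eq. transitivity (acoef (S (S m)) * INR (2 * S (S m)) * (psum c (S m) + c (S m))); [ring|].
      rewrite Hrec. ring.
Qed.

Lemma PSeries_derive_acoefPS_psum x :
  Rbar_le 1 (CV_radius G) -> Rbar_le 1 (CV_radius E) -> Rabs x < 1 ->
  (1 - x ^ 2) * PSeries (PS_derive E) x =
  x * (PSeries G x + PSeries E x) + x ^ 2 * PSeries (PS_derive G) x.
Proof.
  intros HG HE Hx.
  assert (HG' : Rbar_le 1 (CV_radius (PS_derive G))) by (rewrite CV_radius_derive; auto).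
  assert (HE' : Rbar_le 1 (CV_radius (PS_derive E))) by (rewrite CV_radius_derive; auto).
  assert (Hincr : forall p, Rbar_le 1 (CV_radius p) -> Rbar_le 1 (CV_radius (PS_incr_1 p)))
    by (intros; rewrite CV_radius_incr_1; auto).
  assert (HD : PSeries (PS_derive E) x =
    x * (PSeries G x + PSeries E x) + x ^ 2 * (PSeries (PS_derive G) x + PSeries (PS_derive E) x)).
  { etransitivity; [apply PSeries_ext, PS_derive_acoefPS_psum|].
    assert (Hex : forall p, Rbar_le 1 (CV_radius p) -> ex_pseries p x)
      by (intros; apply ex_pseries_radius_1; auto).
    rewrite PSeries_plus; [|apply Hex, Rbar_le_1_CV_radius_plus; apply Hincr; [exact HG|exact HE]
      |apply Hex, Rbar_le_1_CV_radius_plus; apply Hincr, Hincr; [exact HG'|exact HE']].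
    rewrite PSeries_plus; [|apply Hex, Hincr; exact HG|apply Hex, Hincr; exact HE].
    rewrite PSeries_plus; [|apply Hex, Hincr, Hincr; exact HG'|apply Hex, Hincr, Hincr; exact HE'].
    rewrite !PSeries_incr_1. simpl. R_eq. ring. }
  R_eq. replace ((1 - x ^ 2) * PSeries (PS_derive E) x)
    with (PSeries (PS_derive E) x - x ^ 2 * PSeries (PS_derive E) x) by ring.
  rewrite HD at 1. ring.
Qed.

(* The [dt o csc t sec t] part of a letter; the antiderivative comes from the
   differential equation above. *)
Lemma RInt_acoefPS_div_cos2 Y t : Rbar_le 1 (CV_radius G) -> Rbar_le 1 (CV_radius E) ->
  (forall u, I_half u -> u <> 0 -> Y u = sin u * PSeries G (sin u) / cos u ^ 2) -> I_half t ->
  RInt Y 0 t = (sin t ^ 2 * PSeries G (sin t) - cos t ^ 2 * PSeries E (sin t)) / cos t.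
Proof.
  intros HG HE HY Ht.
  rewrite (RInt_I_half_antiderivative
             (fun u => (sin u ^ 2 * PSeries G (sin u) - cos u ^ 2 * PSeries E (sin u)) / cos u)
             (fun u => sin u * PSeries G (sin u) / cos u ^ 2) Y t Ht); auto.
  - rewrite sin_0, cos_0, (PSeries_0 E).
    replace (E 0%nat) with 0 by (unfold acoefPS, evenPS; simpl; R_eq; ring).
    pose proof (cos_pos_I_half t Ht). R_eq. field. lra.
  - intros u Hu. pose proof (Rabs_sin_lt_1 u Hu) as Hs. pose proof (cos_pos_I_half u Hu).
    auto_derive; [repeat split; try (apply ex_derive_PSeries_sin; auto); lra|].
    rewrite !Derive_PSeries_sin by auto.
    pose proof (PSeries_derive_acoefPS_psum (sin u) HG HE Hs) as HD.
    pose proof (sin2_cos2 u) as Hpy. unfold Rsqr in Hpy.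
    set (x := sin u) in *. set (y := cos u) in *.
    assert (Hy2 : y ^ 2 = 1 - x ^ 2) by (rewrite <- Hpy; ring).
    R_eq. transitivity ((y ^ 2 * (2 * x * PSeries G x + x ^ 2 * PSeries (PS_derive G) x
      + x * PSeries E x - y ^ 2 * PSeries (PS_derive E) x) + x ^ 3 * PSeries G x) / y ^ 2);
      [field; lra|].
    assert (Hy2' : 1 - x ^ 2 <> 0) by (rewrite <- Hy2; apply pow_nonzero; lra).
    rewrite Hy2, HD. field. exact Hy2'.
  - intros u Hu. pose proof (cos_pos_I_half u Hu).
    apply (@ex_derive_continuous R_AbsRing R_NormedModule). auto_derive.
    repeat split; try (apply ex_derive_PSeries_sin; auto).
    rewrite Rmult_1_r. apply Rmult_integral_contrapositive. lra.
Qed.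

End PartialSums.

Lemma theta_acoefPS c s1 K t : (1 <= s1)%nat ->
  Rbar_le 1 (CV_radius (acoefPS c)) -> Rbar_le 1 (CV_radius (acoefPS (psum c))) ->
  (forall u, I_half u -> u <> 0 -> K u = sin u * tan u * PSeries (acoefPS c) (sin u)) ->
  I_half t -> t <> 0 ->
  theta s1 K t = sin t * tan t * PSeries (Nat.iter s1 PS_div_succ (acoefPS (psum c))) (sin t).
Proof.
  intros Hs1 HG HE HK Ht Ht0. destruct s1 as [|j]; [lia|].
  unfold theta. replace (S j - 1)%nat with j by lia. unfold Form at 1.
  rewrite (RInt_cos_PSeries_sin (Nat.iter j PS_div_succ (acoefPS (psum c)))); auto.
  - simpl Nat.iter. unfold tan. R_eq. ring.
  - rewrite CV_radius_iter_div_succ; auto.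
  - intros u Hu Hu0. apply iter_Form_cot; auto.
    intros v Hv Hv0. unfold Form, Mul. rewrite (RInt_acoefPS_div_cos2 c); auto.
    + rewrite HK; auto. pose proof (cos_pos_I_half v Hv). unfold tan. R_eq. field. lra.
    + intros w Hw Hw0. rewrite HK; auto.
      pose proof (cos_pos_I_half w Hw). pose proof (sin_neq_0_I_half w Hw Hw0).
      unfold csc, sec, tan. R_eq. field. split; lra.
Qed.

Lemma qw_acoefPS c s1 K t : (1 <= s1)%nat ->
  Rbar_le 1 (CV_radius (acoefPS c)) -> Rbar_le 1 (CV_radius (acoefPS (psum c))) ->
  (forall u, I_half u -> u <> 0 -> K u = tan u * PSeries (acoefPS c) (sin u)) ->
  I_half t -> t <> 0 ->
  qw s1 K t = tan t * PSeries (Nat.iter s1 PS_div_succ (PS_plus (acoefPS c) (acoefPS (psum c)))) (sin t).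
Proof.
  intros Hs1 HG HE HK Ht Ht0. destruct s1 as [|j]; [lia|].
  unfold qw. replace (S j - 1)%nat with j by lia. unfold Form at 1.
  rewrite (RInt_cos_PSeries_sin (Nat.iter j PS_div_succ (PS_plus (acoefPS c) (acoefPS (psum c))))); auto.
  - simpl Nat.iter. unfold tan, sec. pose proof (cos_pos_I_half t Ht). R_eq. field. lra.
  - rewrite CV_radius_iter_div_succ. apply Rbar_le_1_CV_radius_plus; auto.
  - intros u Hu Hu0. apply iter_Form_cot; auto; [apply Rbar_le_1_CV_radius_plus; auto|].
    intros v Hv Hv0. unfold Form, Mul. rewrite (RInt_acoefPS_div_cos2 c); auto.
    + rewrite HK, PSeries_plus by (auto; apply ex_pseries_radius_1; auto; apply Rabs_sin_lt_1; auto).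
      pose proof (cos_pos_I_half v Hv). pose proof (sin_neq_0_I_half v Hv Hv0).
      pose proof (sin2_cos2 v) as Hpy. unfold Rsqr in Hpy.
      unfold tan, csc. R_eq. replace (sin v ^ 2) with (1 - cos v ^ 2) by (rewrite <- Hpy; ring).
      field. split; lra.
    + intros w Hw Hw0. rewrite HK; auto. pose proof (cos_pos_I_half w Hw).
      unfold sec, tan. R_eq. field. lra.
Qed.

(** * The words evaluate to the multiple sums *)

Lemma iter_div_succ_acoefPS k c j :
  Nat.iter k PS_div_succ (acoefPS c) j = acoefPS (fun m => c m / INR (2 * m + 1) ^ k) j.
Proof. unfold acoefPS. rewrite iter_div_succ_evenPS. apply evenPS_ext. intros. unfold Rdiv. ring. Qed.

Lemma acoefPS_mcoef_strict_cons n s1 r j :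
  Nat.iter s1 PS_div_succ (acoefPS (psum (mcoef true n r))) j = acoefPS (mcoef true n (s1 :: r)) j.
Proof.
  rewrite iter_div_succ_acoefPS. apply evenPS_ext. intros m. rewrite psum_mcoef_strict. reflexivity.
Qed.

Lemma acoefPS_mcoef_nonstrict_cons n s1 r j :
  Nat.iter s1 PS_div_succ (PS_plus (acoefPS (mcoef false n r)) (acoefPS (psum (mcoef false n r)))) j =
  acoefPS (mcoef false n (s1 :: r)) j.
Proof.
  rewrite (iter_div_succ_ext s1 _ (acoefPS (fun m => psum (mcoef false n r) (S m)))).
  - rewrite iter_div_succ_acoefPS. apply evenPS_ext. intros m. rewrite psum_mcoef_nonstrict. reflexivity.
  - intros k. rewrite PS_plus_eq. unfold acoefPS, evenPS. destruct (Nat.even k); simpl; ring.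
Qed.

Lemma ex_pseries_acoefPS_mcoef b n s x : List.Forall (fun k => (1 <= k)%nat) s -> Rabs x <= 1 ->
  ex_pseries (acoefPS (mcoef b n s)) x.
Proof.
  intros Hs Hx. apply CV_disk_correct, (CV_disk_le _ _ 1); [rewrite Rabs_R1; auto|].
  apply acoefPS_mcoef_CV_disk; auto.
Qed.

Lemma PSeries_acoefPS_mcoef_nil b n x : Rabs x <= 1 -> PSeries (acoefPS (mcoef b n [])) x = a n x.
Proof.
  intros Hx.
  pose proof (PSeries_evenPS_lim _ x (ex_pseries_acoefPS_mcoef b n [] x (Forall_nil _) Hx)) as Hlim.
  assert (Hconst :
    is_lim_seq (fun N => psum (fun k => acoef k * mcoef b n [] k * x ^ (2 * k)) (S N)) (a n x)).
  { apply is_lim_seq_ext_loc with (fun _ => a n x); [|apply is_lim_seq_const].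
    exists n. intros N HN.
    rewrite (psum_ext _ (fun k => (acoef n * x ^ (2 * n)) * (if Nat.eqb k n then 1 else 0))).
    - rewrite psum_scal, psum_indicator, a_acoef. destruct (Nat.ltb_spec n (S N)); [ring|lia].
    - intros k _. unfold mcoef. destruct (Nat.eqb_spec k n); subst; ring. }
  apply is_lim_seq_unique in Hlim, Hconst. rewrite Hlim in Hconst. injection Hconst. auto.
Qed.

Lemma word_theta_acoefPS n s : List.Forall (fun k => (1 <= k)%nat) s -> forall t, I_half t -> t <> 0 ->
  fold_right theta (fun t => a n (sin t) * sin t * tan t) s t =
  sin t * tan t * PSeries (acoefPS (mcoef true n s)) (sin t).
Proof.
  induction s as [|s1 r IH]; intros Hs t Ht Ht0.
  - simpl. rewrite PSeries_acoefPS_mcoef_nil by (left; apply Rabs_sin_lt_1; auto). ring.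
  - inversion Hs as [|? ? Hs1 Hr]; subst. simpl fold_right.
    rewrite (theta_acoefPS (mcoef true n r) s1 _ t); auto.
    + f_equal. apply PSeries_ext, acoefPS_mcoef_strict_cons.
    + apply acoefPS_mcoef_CV_disk; auto.
    + rewrite <- (CV_radius_iter_div_succ s1), (CV_radius_ext _ _ (acoefPS_mcoef_strict_cons n s1 r)).
      apply acoefPS_mcoef_CV_disk; auto.
Qed.

Lemma word_qw_acoefPS n s : List.Forall (fun k => (1 <= k)%nat) s -> forall t, I_half t -> t <> 0 ->
  fold_right qw (fun t => a n (sin t) * tan t) s t =
  tan t * PSeries (acoefPS (mcoef false n s)) (sin t).
Proof.
  induction s as [|s1 r IH]; intros Hs t Ht Ht0.
  - simpl. rewrite PSeries_acoefPS_mcoef_nil by (left; apply Rabs_sin_lt_1; auto). ring.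
  - inversion Hs as [|? ? Hs1 Hr]; subst. simpl fold_right.
    set (c := mcoef false n r).
    assert (HG : Rbar_le 1 (CV_radius (acoefPS c))) by (apply acoefPS_mcoef_CV_disk; auto).
    assert (HGE : Rbar_le 1 (CV_radius (PS_plus (acoefPS c) (acoefPS (psum c))))).
    { unfold c. rewrite <- (CV_radius_iter_div_succ s1).
      rewrite (CV_radius_ext _ _ (acoefPS_mcoef_nonstrict_cons n s1 r)).
      apply acoefPS_mcoef_CV_disk; auto. }
    rewrite (qw_acoefPS c s1 _ t); auto.
    + f_equal. apply PSeries_ext, acoefPS_mcoef_nonstrict_cons.
    + rewrite (CV_radius_ext _ (PS_plus (PS_plus (acoefPS c) (acoefPS (psum c))) (PS_opp (acoefPS c)))).
      * apply Rbar_le_1_CV_radius_plus; auto. rewrite CV_radius_opp. auto.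
      * intros k. rewrite !PS_plus_eq. unfold PS_opp, opp. simpl. ring.
Qed.

Lemma Derive_RInt_I_half (K h : R -> R) y : I_half y ->
  (forall u, I_half u -> continuous h u) -> (forall u, I_half u -> u <> 0 -> K u = h u) ->
  Derive (fun z => RInt K 0 z) y = h y.
Proof.
  intros Hy Hh HK. rewrite (Derive_ext_loc _ (RInt h 0)).
  - apply Derive_RInt; auto. apply filter_imp with I_half; [|apply locally_I_half; auto].
    intros z Hz. apply (@ex_RInt_continuous R_CompleteNormedModule).
    intros w Hw. apply Hh, (I_half_between z); auto.
  - apply filter_imp with I_half; [|apply locally_I_half; auto].
    intros z Hz. apply RInt_ext. intros u Hu. apply HK; [apply (I_half_between z); [auto|lra]|].
    unfold Rmin, Rmax in Hu. destruct (Rle_dec 0 z); lra.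
Qed.

Lemma RHS1_PSeries n s y : List.Forall (fun k => (1 <= k)%nat) s -> I_half y -> y <> 0 ->
  RHS1 n s y = PSeries (acoefPS (mcoef true n s)) (sin y).
Proof.
  intros Hs Hy Hy0. pose proof (proj2 (acoefPS_mcoef_CV_disk true n s Hs)) as Hr.
  unfold RHS1.
  rewrite (Derive_RInt_I_half _ (fun u => sin u * tan u * PSeries (acoefPS (mcoef true n s)) (sin u)));
    auto.
  - pose proof (sin_neq_0_I_half y Hy Hy0). pose proof (cos_pos_I_half y Hy).
    unfold csc, cot, tan. field. split; lra.
  - intros u Hu. pose proof (cos_pos_I_half u Hu).
    apply (@ex_derive_continuous R_AbsRing R_NormedModule). unfold tan. auto_derive.
    repeat split; try apply ex_derive_PSeries_sin; auto; lra.
  - apply word_theta_acoefPS; auto.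
Qed.

Lemma RHS2_PSeries n s y : List.Forall (fun k => (1 <= k)%nat) s -> I_half y -> y <> 0 ->
  RHS2 n s y = PSeries (acoefPS (mcoef false n s)) (sin y).
Proof.
  intros Hs Hy Hy0. pose proof (proj2 (acoefPS_mcoef_CV_disk false n s Hs)) as Hr.
  unfold RHS2.
  rewrite (Derive_RInt_I_half _ (fun u => tan u * PSeries (acoefPS (mcoef false n s)) (sin u))); auto.
  - pose proof (sin_neq_0_I_half y Hy Hy0). pose proof (cos_pos_I_half y Hy).
    unfold cot, tan. field. split; lra.
  - intros u Hu. pose proof (cos_pos_I_half u Hu).
    apply (@ex_derive_continuous R_AbsRing R_NormedModule). unfold tan. auto_derive.
    repeat split; try apply ex_derive_PSeries_sin; auto; lra.
  - apply word_qw_acoefPS; auto.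
Qed.

Lemma is_lim_seq_trunc b n s x : s <> [] -> List.Forall (fun k => (1 <= k)%nat) s -> Rabs x <= 1 ->
  is_lim_seq (trunc b s n x) (PSeries (acoefPS (mcoef b n s)) x).
Proof.
  intros Hne Hs Hx. destruct s as [|s1 r]; [congruence|].
  eapply is_lim_seq_ext; [|apply PSeries_evenPS_lim, ex_pseries_acoefPS_mcoef; auto].
  intros N. unfold trunc. rewrite fold_right_map_seq. apply psum_ext. intros k _.
  rewrite Nat.add_0_l, a_acoef. unfold mcoef.
  assert (Hnz : INR (2 * k + 1) <> 0) by (apply not_0_INR; lia).
  pose proof (pow_nonzero _ s1 Hnz). field. auto.
Qed.

Lemma msum_PSeries b n s x : s <> [] -> List.Forall (fun k => (1 <= k)%nat) s -> Rabs x <= 1 ->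
  msum b s n x = PSeries (acoefPS (mcoef b n s)) x.
Proof.
  intros Hne Hs Hx. unfold msum. rewrite (is_lim_seq_unique _ _ (is_lim_seq_trunc b n s x Hne Hs Hx)).
  reflexivity.
Qed.

(** * Boundary behaviour *)

Lemma PSeries_at_left_1 p : CV_disk p 1 -> Rbar_le 1 (CV_radius p) ->
  filterlim (PSeries p) (at_left 1) (locally (PSeries p 1)).
Proof.
  intros Hd Hr. destruct (Rbar_lt_dec 1 (CV_radius p)) as [Hlt|Hnlt].
  - apply (filterlim_filter_le_1 (F := locally 1)); [apply filter_le_within|].
    apply continuity_pt_filterlim, PSeries_continuity. rewrite Rabs_R1. auto.
  - assert (Heq : CV_radius p = Finite 1) by (apply Rbar_le_antisym; auto; apply Rbar_not_lt_le; auto).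
    pose proof (Abel p) as HA. rewrite Heq in HA. simpl in HA. apply HA; simpl; auto.
    + lra.
    + apply CV_disk_correct. auto.
Qed.

Lemma sin_at_left_PI2 : filterlim sin (at_left (PI / 2)) (at_left 1).
Proof.
  intros P HP.
  assert (Hc : filterlim sin (locally (PI / 2)) (locally 1)).
  { rewrite <- sin_PI2. apply continuity_pt_filterlim, continuity_sin. }
  assert (Hpos : locally (PI / 2) (fun y => 0 < y)).
  { pose proof PI_RGT_0. apply (locally_interval _ _ (Finite 0) p_infty); simpl; auto. lra. }
  specialize (Hc _ HP). unfold filtermap, at_left, within in *.
  generalize (filter_and _ _ Hc Hpos). apply filter_imp.
  intros y [H1 H2] H3. apply H1. pose proof (Rabs_sin_lt_1 y ltac:(split; lra)) as Hs.
  apply Rabs_def2 in Hs. lra.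
Qed.

Lemma opp_sin_at_right_mPI2 : filterlim (fun y => - sin y) (at_right (- PI / 2)) (at_left 1).
Proof.
  intros P HP.
  assert (Hc : filterlim (fun y => - sin y) (locally (- PI / 2)) (locally 1)).
  { replace 1 with (- sin (- PI / 2)).
    - apply (continuity_pt_filterlim (fun y => - sin y)), continuity_pt_opp, continuity_sin.
    - replace (- PI / 2) with (- (PI / 2)) by field. rewrite sin_neg, sin_PI2. ring. }
  assert (Hneg : locally (- PI / 2) (fun y => y < 0)).
  { pose proof PI_RGT_0. apply (locally_interval _ _ m_infty (Finite 0)); simpl; auto. lra. }
  specialize (Hc _ HP). unfold filtermap, at_right, within in *.
  generalize (filter_and _ _ Hc Hneg). apply filter_imp.
  intros y [H1 H2] H3. apply H1. pose proof (Rabs_sin_lt_1 y ltac:(split; lra)) as Hs.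
  apply Rabs_def2 in Hs. lra.
Qed.

Section Boundary.

Variables (p : nat -> R) (F : R -> R).
Hypothesis Hdisk : CV_disk p 1.
Hypothesis Hradius : Rbar_le 1 (CV_radius p).
Hypothesis HF : forall y, I_half y -> y <> 0 -> F y = PSeries p (sin y).

Lemma is_lim_PSeries_sin_0 : is_lim F 0 (PSeries p (sin 0)).
Proof.
  apply is_lim_ext_loc with (fun y => PSeries p (sin y)).
  - simpl. unfold locally', within.
    apply filter_imp with I_half; [intros y Hy Hy0; symmetry; apply HF; auto|].
    apply locally_I_half. pose proof PI_RGT_0. split; lra.
  - assert (Hc : continuity_pt (fun y => PSeries p (sin y)) 0).
    { apply continuity_pt_filterlim.
      apply (@ex_derive_continuous R_AbsRing R_NormedModule (fun y => PSeries p (sin y)) 0).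
      auto_derive. apply ex_derive_PSeries_sin; auto. pose proof PI_RGT_0. split; lra. }
    exact (is_lim_continuity _ 0 Hc).
Qed.

Lemma PSeries_sin_at_left_PI2 : filterlim F (at_left (PI / 2)) (locally (PSeries p (sin (PI / 2)))).
Proof.
  pose proof PI_RGT_0. rewrite sin_PI2.
  apply filterlim_ext_loc with (fun y => PSeries p (sin y)).
  - unfold at_left, within. apply filter_imp with (fun y => 0 < y).
    + intros y Hy Hy1. symmetry. apply HF; [split|]; lra.
    + apply (locally_interval _ _ (Finite 0) p_infty); simpl; auto. lra.
  - eapply filterlim_comp; [apply sin_at_left_PI2|apply PSeries_at_left_1; auto].
Qed.

Hypothesis Heven : forall x, PSeries p (- x) = PSeries p x.

Lemma PSeries_sin_at_right_mPI2 :
  filterlim F (at_right (- PI / 2)) (locally (PSeries p (sin (- PI / 2)))).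
Proof.
  pose proof PI_RGT_0.
  replace (- PI / 2) with (- (PI / 2)) at 2 by field. rewrite sin_neg, Heven, sin_PI2.
  apply filterlim_ext_loc with (fun y => PSeries p (- sin y)).
  - unfold at_right, within. apply filter_imp with (fun y => y < 0).
    + intros y Hy Hy1. rewrite HF, Heven; [|split|]; lra.
    + apply (locally_interval _ _ m_infty (Finite 0)); simpl; auto. lra.
  - eapply filterlim_comp; [apply opp_sin_at_right_mPI2|apply PSeries_at_left_1; auto].
Qed.

End Boundary.

Theorem theorem3p1 (n : nat) (s : list nat) :
  s <> nil -> List.Forall (fun k => (1 <= k)%nat) s ->
  (* both multiple series converge on [-pi/2, pi/2] *)
  (forall y, - PI / 2 <= y <= PI / 2 ->
     ex_finite_lim_seq (trunc true s n (sin y)) /\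
     ex_finite_lim_seq (trunc false s n (sin y))) /\
  (* the identities, pointwise for 0 < |y| < pi/2 *)
  (forall y, - PI / 2 < y < PI / 2 -> y <> 0 ->
     msum true s n (sin y) = RHS1 n s y /\
     msum false s n (sin y) = RHS2 n s y) /\
  (* at y = 0 (removable singularity) as limits *)
  is_lim (RHS1 n s) 0 (msum true s n (sin 0)) /\
  is_lim (RHS2 n s) 0 (msum false s n (sin 0)) /\
  (* at y = +- pi/2 as one-sided limits *)
  filterlim (RHS1 n s) (at_left (PI / 2)) (locally (msum true s n (sin (PI / 2)))) /\
  filterlim (RHS2 n s) (at_left (PI / 2)) (locally (msum false s n (sin (PI / 2)))) /\
  filterlim (RHS1 n s) (at_right (- PI / 2)) (locally (msum true s n (sin (- PI / 2)))) /\
  filterlim (RHS2 n s) (at_right (- PI / 2)) (locally (msum false s n (sin (- PI / 2)))).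
Proof.
  intros Hne Hs.
  assert (Hsin : forall y, Rabs (sin y) <= 1) by (intros; apply Rabs_le, SIN_bound).
  assert (Hmsum : forall b y, msum b s n (sin y) = PSeries (acoefPS (mcoef b n s)) (sin y))
    by (intros; apply msum_PSeries; auto).
  destruct (acoefPS_mcoef_CV_disk true n s Hs) as [Hd1 Hr1].
  destruct (acoefPS_mcoef_CV_disk false n s Hs) as [Hd2 Hr2].
  pose proof (fun y => RHS1_PSeries n s y Hs) as HR1.
  pose proof (fun y => RHS2_PSeries n s y Hs) as HR2.
  rewrite !Hmsum.
  split; [|split; [|split; [|split; [|split; [|split; [|split]]]]]].
  - intros y Hy. split; eexists; apply is_lim_seq_trunc; auto.
  - intros y Hy Hy0. rewrite HR1, HR2; auto.
  - exact (is_lim_PSeries_sin_0 _ _ Hr1 HR1).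
  - exact (is_lim_PSeries_sin_0 _ _ Hr2 HR2).
  - exact (PSeries_sin_at_left_PI2 _ _ Hd1 Hr1 HR1).
  - exact (PSeries_sin_at_left_PI2 _ _ Hd2 Hr2 HR2).
  - exact (PSeries_sin_at_right_mPI2 _ _ Hd1 Hr1 HR1 (PSeries_evenPS_opp _)).
  - exact (PSeries_sin_at_right_mPI2 _ _ Hd2 Hr2 HR2 (PSeries_evenPS_opp _)).
Qed.
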